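(* Suppose $\frac2{n+1}<R\le1$ and let $\ell_2=\min\{n,\lfloor n/R\rfloor\}$ (so here $\ell_2=n$). Then for every bid set $B_{\mathcal D}$ of $\mathcal D$ (a multiset of $n$ nonnegative reals with sum $\beta$), $$W(\pi_{\rm unif},B_{\mathcal D})\ge f(\ell_2).$$
   Context: Position-randomized auction with two bidders $\mathcal A$ and $\mathcal D$ and $n\ge1$ objects. $\mathcal D$ has budget $\beta>0$ and $\mathcal A$ has budget $R\beta$ with $R>0$. A bidding algorithm of a bidder is a pair $(\pi,B)$: $B$ (the bid set) is a multiset of $n$ nonnegative reals whose sum is at most the bidder's budget, and $\pi$ is a randomized algorithm permuting sequences of length $n$. Applying $\pi$ to a listing of $B$ gives the final bid sequence, whose $i$-th entry is the bid on object $i$. The two bidders' permutations are independent. Each object goes to the higher bid; on a tie each bidder wins it with probability $1/2$. $w(\pi_{\mathcal A},\pi_{\mathcal D},B_{\mathcal A},B_{\mathcal D})$ is the expected number of objects won by $\mathcal A$. $W(\pi_{\mathcal D},B_{\mathcal D})$ is its supremum over all bidding algorithms $(\pi_{\mathcal A},B_{\mathcal A})$ of $\mathcal A$. $\pi_{\rm unif}$ applies a uniformly random permutation. For $x,y>0$, $\mathrm{less}(x,y)=y(\lceil x/y\rceil-1)$. For $\ell=1,\dots,n$, let $R_\ell=\mathrm{less}(R,\frac2{\ell(\ell+1)})$ and $f(\ell)=n-\ell+\frac{\ell(\ell+1)R_\ell}{2n}$. *)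

From HB Require Import structures.
From mathcomp Require Import all_boot all_order all_algebra all_fingroup.
From mathcomp Require Import boolp classical_sets reals.
Set Implicit Arguments. Unset Strict Implicit. Unset Printing Implicit Defensive.
Import Order.TTheory GRing.Theory Num.Theory.
Local Open Scope ring_scope.
Local Open Scope classical_set_scope.

Section Auction.
Variable R : realType.

(* A randomized permutation algorithm on sequences of length n:
   a probability distribution on the permutations of the positions 'I_n. *)
Definition perm_distr (n : nat) (p : {perm 'I_n} -> R) : Prop :=
  (forall s, 0 <= p s) /\ \sum_(s : {perm 'I_n}) p s = 1.

Definition pi_unif (n : nat) : {perm 'I_n} -> R :=
  fun _ => (#|{perm 'I_n}|%:R)^-1.

Definition bid_set (n : nat) (budget : R) (b : 'I_n -> R) : Prop :=
  (forall i, 0 <= b i) /\ \sum_i b i <= budget.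

(* Expected gain of A on one object, with A bidding a and D bidding d. *)
Definition win (a d : R) : R :=
  if d < a then 1 else if a == d then 2^-1 else 0.

(* Final bid sequence of a bidder: applying permutation s to the listing b
   gives the sequence i |-> b (s i).
   w(pi_A, pi_D, B_A, B_D) = expected number of objects won by A,
   the two permutations being independent. *)
Definition w (n : nat) (pA pD : {perm 'I_n} -> R) (bA bD : 'I_n -> R) : R :=
  \sum_(sA : {perm 'I_n}) \sum_(sD : {perm 'I_n})
     pA sA * pD sD * \sum_(i < n) win (bA (sA i)) (bD (sD i)).

Definition W (n : nat) (rho beta : R) (pD : {perm 'I_n} -> R) (bD : 'I_n -> R) : R :=
  sup [set x | exists (pA : {perm 'I_n} -> R) (bA : 'I_n -> R),
          perm_distr pA /\ bid_set (rho * beta) bA /\ x = w pA pD bA bD].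

Definition less (x y : R) : R := y * ((Num.ceil (x / y))%:~R - 1).

Definition R_ell (rho : R) (l : nat) : R := less rho (2 / (l * l.+1)%:R).

Definition f (n : nat) (rho : R) (l : nat) : R :=
  n%:R - l%:R + (l * l.+1)%:R * R_ell rho l / (2 * n%:R).

Definition ell2 (n : nat) (rho : R) : nat :=
  minn n `|Num.floor (n%:R / rho)|%N.

End Auction.
Arguments W {R} n rho beta pD bD.
Arguments pi_unif R n _ : clear implicits.
Arguments ell2 {R} n rho.

From HB Require Import structures.
From mathcomp Require Import all_boot all_order all_algebra all_fingroup.
From mathcomp Require Import boolp classical_sets reals.
From mathcomp Require Import zify ring lra.
Set Implicit Arguments. Unset Strict Implicit. Unset Printing Implicit Defensive.
Import Order.TTheory GRing.Theory Num.Theory.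
Local Open Scope ring_scope.

(* Against a uniformly permuted bid vector, a bid just above the v-th smallest
   bid e_v of D wins each object with probability at least v/n.  Bidding just
   above e_v for every level v of a list s of at most n levels therefore wins
   at least (sum s)/n objects for about sum_(v in s) e_v (with e_0 = 0).  With
   N = n(n+1)/2 and k = ceil(rho N) - 1 we have f(ell_2) = k/n, so it suffices
   to find levels with sum at least k and cost at most k/N (e_1 + ... + e_n) =
   k beta / N < rho beta; this holds for arbitrary reals e_v.  If
   N - k <= (n+1)/2, lower D = N - k of the levels 1, ..., n by one, at the D
   largest increments e_(i+1) - e_i: this beats lowering level i + 1 by the
   fraction (n-i)D/N, whose cost is exactly k/N (e_1 + ... + e_n) by summation
   by parts.  Otherwise use copies of a pair {a, n+1-a} whose cost is at most
   the average, completed by at most four levels built from similar pairs. *)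

Section OrderedSums.
Variable R : realFieldType.

Lemma exists_threshold_subset n D (d : 'I_n -> R) : (D <= n)%N ->
  exists T : {set 'I_n}, #|T| = D /\
    exists t, (forall i, i \in T -> t <= d i) /\ (forall j, j \notin T -> d j <= t).
Proof.
move=> leDn.
pose T0 := [set widen_ord leDn j | j : 'I_D].
have cardT0 : #|T0| == D.
  rewrite card_imset ?card_ord //.
  by move=> a b /(congr1 val) /= /val_inj.
have [T /eqP cardT Tmax] :=
  @arg_maxP _ R _ T0 (fun T : {set 'I_n} => #|T| == D) (fun T => \sum_(i in T) d i) cardT0.
exists T; split=> //.
have swap i j : i \in T -> j \notin T -> d j <= d i.
  move=> Ti Tj; have cardTij : #|j |: (T :\ i)| == D.
    by rewrite cardsU1 in_setD1 (negbTE Tj) andbF -cardT (cardsD1 i T) Ti.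
  have := Tmax _ cardTij.
  rewrite big_setU1 /= ?in_setD1 ?(negbTE Tj) ?andbF // (big_setD1 i Ti) /=.
  lra.
case: (pickP (mem T)) => [i0 Ti0 | T0empty].
  case: (arg_minP d Ti0) => m Tm mmin.
  by exists (d m); split=> [i /mmin|j /(swap m j Tm)].
(* [T] is empty: any upper bound of [d] separates. *)
exists (\sum_j `|d j|); split=> [i Ti|j _]; first by have := T0empty i; rewrite /= Ti.
rewrite (bigD1 j) //= -[X in X <= _]addr0 lerD ?ler_norm ?sumr_ge0 //.
Qed.

Lemma exists_subset_sum_ge_weighted n D (p d : 'I_n -> R) : (D <= n)%N ->
  (forall i, 0 <= p i <= 1) -> \sum_i p i = D%:R ->
  exists T : {set 'I_n}, #|T| = D /\ \sum_i p i * d i <= \sum_(i in T) d i.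
Proof.
move=> leDn p01 sum_p.
have [T [cardT [t [Tge Tle]]]] := exists_threshold_subset d leDn.
exists T; split=> //; rewrite -subr_ge0.
have sum_ind : \sum_i ((i \in T)%:R : R) = D%:R.
  rewrite -cardT -sum1_card natr_sum [RHS]big_mkcond /=.
  by apply: eq_bigr => i _; case: (i \in T).
have key : \sum_i ((i \in T)%:R - p i) * (d i - t) = \sum_(i in T) d i
    - \sum_i p i * d i - t * (\sum_i ((i \in T)%:R : R) - \sum_i p i).
  rewrite (big_mkcond (mem T)) -!sumrB mulr_sumr -sumrB.
  apply: eq_bigr => i _; case: (boolP (i \in T)) => Ti.
    by rewrite ifT //=; ring.
  by rewrite ifF //=; [ring | apply: negbTE].
rewrite sum_ind sum_p subrr mulr0 subr0 in key; rewrite -key.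
(* [d i - t] has the sign of [(i \in T) - p i]. *)
apply: sumr_ge0 => i _; case/andP: (p01 i) => p0 p1.
case: (boolP (i \in T)) => Ti.
  by rewrite mulr_ge0 ?subr_ge0 ?Tge.
by rewrite mulr_le0 ?subr_le0 ?Tle // sub0r oppr_le0.
Qed.

Lemma exists_le_mean_nat (F : nat -> R) lo hi : (lo <= hi)%N ->
  exists2 a, (lo <= a <= hi)%N & (hi - lo).+1%:R * F a <= \sum_(lo <= i < hi.+1) F i.
Proof.
move=> le_lo_hi; have lo_lt : (lo < hi.+1)%N by [].
have [a lo_a amin] := @arg_minP _ R _ (Ordinal lo_lt) (fun i : 'I_hi.+1 => lo <= i)%N
  (fun i => F i) (leqnn lo).
exists a; first by rewrite lo_a -ltnS ltn_ord.
rewrite -subSn // mulr_natl -sumr_const_nat; apply: ler_sum_nat => i /andP[lo_i i_lt].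
exact: (amin (Ordinal i_lt)).
Qed.

Lemma exists_pair_le_mean (F : nat -> R) lo hi : (lo <= hi)%N ->
  exists2 a, (lo <= a <= hi)%N &
    (hi - lo).+1%:R * (F a + F (lo + hi - a)%N) <= 2 * \sum_(lo <= i < hi.+1) F i.
Proof.
move=> le_lo_hi.
have [a a_in mean_a] := exists_le_mean_nat (fun a => F a + F (lo + hi - a)%N) le_lo_hi.
exists a => //; move: mean_a; rewrite big_split /=.
suff -> : \sum_(lo <= i < hi.+1) F (lo + hi - i)%N = \sum_(lo <= i < hi.+1) F i by lra.
rewrite big_nat_rev /=; apply: eq_big_nat => i /andP[lo_i i_lt]; congr F; lia.
Qed.

End OrderedSums.

Lemma triangular_double n : 'C(n.+1, 2).*2 = (n * n.+1)%N.
Proof. by elim: n => // n IH; rewrite binS bin1 doubleD IH; nia. Qed.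

Lemma triangular_sum_ord n : (\sum_(i < n) i.+1)%N = 'C(n.+1, 2).
Proof. by elim: n => [|n IH]; rewrite ?big_ord0 // big_ord_recr /= IH [RHS]binS bin1. Qed.

Lemma triangular_sum_rev_ord n : (\sum_(i < n) (n - i))%N = 'C(n.+1, 2).
Proof.
rewrite -triangular_sum_ord (reindex_inj rev_ord_inj) /=.
by apply: eq_bigr => i _ /=; have := ltn_ord i; lia.
Qed.

Section Levels.
Variables (R : realFieldType) (e : nat -> R) (n : nat).
Hypothesis e0 : e 0%N = 0.

Let E := \sum_(i < n) e i.+1.
Let N := 'C(n.+1, 2).

Lemma sum_by_parts : E = \sum_(i < n) (n - i)%:R * (e i.+1 - e i).
Proof.
rewrite /E; elim: n => [|m IH]; first by rewrite !big_ord0.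
rewrite !big_ord_recr /= IH subSnn mul1r.
have -> : \sum_(i < m) (m.+1 - i)%:R * (e i.+1 - e i) =
          \sum_(i < m) (m - i)%:R * (e i.+1 - e i) + \sum_(i < m) (e i.+1 - e i).
  rewrite -big_split /=; apply: eq_bigr => i _.
  by rewrite subSn 1?ltnW // -addn1 natrD; ring.
rewrite -(big_mkord xpredT (fun i => e i.+1 - e i)) telescope_sumr // e0 subr0.
ring.
Qed.

Lemma exists_levels_rounding k : (0 < n)%N -> (k <= N)%N -> ((N - k).*2 <= n.+1)%N ->
  exists s : seq nat, [/\ (size s <= n)%N, all (leq^~ n) s, (k <= sumn s)%N &
    N%:R * \sum_(v <- s) e v <= k%:R * E].
Proof.
move=> n_gt0 le_k_N small_gap; set D := (N - k)%N.
have N2 := triangular_double n; rewrite -/N in N2.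
have leDn : (D <= n)%N by lia.
have N_gt0 : 0 < N%:R :> R by rewrite ltr0n; nia.
pose p (i : 'I_n) := (n - i)%:R * D%:R / N%:R : R.
have p01 i : 0 <= p i <= 1.
  rewrite divr_ge0 ?mulr_ge0 //= ler_pdivrMr // mul1r -natrM ler_nat.
  by apply: leq_trans (leq_mul (leq_subr i n) (leqnn D)) _; nia.
have sum_p : \sum_i p i = D%:R.
  by rewrite -!mulr_suml -natr_sum triangular_sum_rev_ord mulrAC divff ?mul1r ?gt_eqF.
have [T [cardT T_ge]] := exists_subset_sum_ge_weighted (fun i : 'I_n => e i.+1 - e i)
  leDn p01 sum_p.
exists [seq (i.+1 - (i \in T))%N | i : 'I_n <- enum 'I_n]; split.
- by rewrite size_map size_enum_ord.
- by apply/allP => v /mapP[i _ ->]; apply: leq_trans (leq_subr _ _) (ltn_ord i).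
- have : (sumn [seq (i.+1 - (i \in T))%N | i : 'I_n <- enum 'I_n] + #|T| = N)%N.
    rewrite sumnE big_map big_enum /= -sum1_card /N -triangular_sum_ord (big_mkcond (mem T)).
    rewrite -big_split /=.
    by apply: eq_bigr => i _; case: (i \in T) => /=; have := ltn_ord i; lia.
  lia.
- have -> : \sum_(v <- [seq (i.+1 - (i \in T))%N | i : 'I_n <- enum 'I_n]) e v =
            E - \sum_(i in T) (e i.+1 - e i).
    rewrite big_map big_enum /E (big_mkcond (mem T)) -sumrB /=.
    by apply: eq_bigr => i _; case: (i \in T) => /=; rewrite ?subn1 /=; ring.
  have : D%:R / N%:R * E <= \sum_(i in T) (e i.+1 - e i).
    apply: le_trans T_ge; rewrite sum_by_parts mulr_sumr.
    by rewrite [X in X <= _](eq_bigr (fun i => p i * (e i.+1 - e i))) // => i _; rewrite /p; ring.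
  rewrite mulrAC ler_pdivrMr // => DE_le.
  have -> : k%:R = N%:R - D%:R :> R by rewrite -natrB ?leq_subr // subKn.
  lra.
Qed.

Lemma triangular_double_natr : 2 * N%:R = n%:R * n.+1%:R :> R.
Proof. by rewrite -[RHS]natrM -triangular_double -mul2n natrM. Qed.

Lemma sum_levels_from1 : \sum_(1 <= i < n.+1) e i = E.
Proof. by rewrite big_add1 /= big_mkord. Qed.

Lemma sum_levels_from0 : \sum_(0 <= i < n.+1) e i = E.
Proof. by rewrite big_nat_recl // e0 add0r big_mkord. Qed.

Lemma exists_pair_sum_succ : (0 < n)%N ->
  exists2 a, (1 <= a <= n)%N & n%:R * (e a + e (n.+1 - a)) <= 2 * E.
Proof.
move=> n_gt0; have [a a_in mean_a] := exists_pair_le_mean e n_gt0.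
by exists a => //; rewrite sum_levels_from1 subn1 prednK in mean_a.
Qed.

Lemma exists_pair_sum_n :
  exists2 c, (c <= n)%N & n.+1%:R * (e c + e (n - c)) <= 2 * E.
Proof.
have [c c_in mean_c] := exists_pair_le_mean e (leq0n n).
by exists c; rewrite // sum_levels_from0 subn0 in mean_c.
Qed.

Lemma exists_base_levels_gt j : (j < n)%N ->
  exists s : seq nat, [/\ (size s <= 4)%N, all (leq^~ n) s, sumn s = (n.+1 + j)%N &
    N%:R * \sum_(v <- s) e v <= (n.+1 + j)%:R * E].
Proof.
move=> lt_j_n; set S := \sum_(0 <= i < j.+1) e i.
have [p p_in mean_p] := exists_pair_le_mean e (leq0n j).
have [a a_in mean_a] := exists_pair_sum_succ (leq_ltn_trans (leq0n j) lt_j_n).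
have [y y_in mean_y] := exists_pair_le_mean e (lt_j_n : (j.+1 <= n)%N).
have sum_upper : \sum_(j.+1 <= i < n.+1) e i = E - S.
  rewrite -sum_levels_from0 (big_cat_nat (leq0n j.+1)) /=; last by lia.
  by rewrite /S; ring.
rewrite subn0 add0n -/S in mean_p; rewrite sum_upper subnSK // in mean_y.
set cX := e p + e (j - p) + (e a + e (n.+1 - a)).
set cY := e y + e (j.+1 + n - y).
have avg : j.+1%:R * n%:R * cX + (n - j)%:R * n%:R * cY <= 2 * (n.+1 + j)%:R * E.
  have := ler_wpM2l (ler0n R n) mean_p; have := ler_wpM2l (ler0n R j.+1) mean_a.
  have := ler_wpM2l (ler0n R n) mean_y; rewrite natrD -!natr1 /cX /cY.
  lra.
have bound_min c : c <= cX -> c <= cY -> N%:R * c <= (n.+1 + j)%:R * E.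
  move=> le_cX le_cY.
  have := ler_wpM2l (ler0n R (j.+1 * n)) le_cX.
  have := ler_wpM2l (ler0n R ((n - j) * n)) le_cY.
  have := congr1 ( *%R^~ c) triangular_double_natr.
  rewrite natrD !natrM natrB 1?ltnW // -!natr1 in avg *.
  lra.
case: (leP cX cY) => [le_XY | lt_YX].
  exists [:: p; j - p; a; n.+1 - a]%N; split=> /=; try lia.
  by rewrite !big_cons big_nil addr0 addrA bound_min.
exists [:: y; j.+1 + n - y]%N; split=> /=; try lia.
by rewrite !big_cons big_nil addr0 bound_min // ltW.
Qed.

Lemma exists_base_levels r : (n <= r <= n + n)%N ->
  exists s : seq nat, [/\ (size s <= if r == n then 2 else 4)%N, all (leq^~ n) s,
    sumn s = r & N%:R * \sum_(v <- s) e v <= r%:R * E].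
Proof.
case: (eqVneq r n) => [-> _ | ne_rn r_in]; last first.
  have [|s] := exists_base_levels_gt (j := (r - n.+1)%N); first lia.
  by rewrite subnKC; [exists s | lia].
have [c c_le mean_c] := exists_pair_sum_n.
exists [:: c; n - c]%N; split=> //=; try lia.
rewrite !big_cons big_nil addr0.
have := ler_wpM2l (ler0n R n) mean_c.
have := congr1 ( *%R^~ (e c + e (n - c))) triangular_double_natr.
rewrite -natr1; lra.
Qed.

Lemma exists_levels_pairing k : (0 < n)%N -> (n <= k)%N -> (n.+1 < (N - k).*2)%N ->
  exists s : seq nat, [/\ (size s <= n)%N, all (leq^~ n) s, (k <= sumn s)%N &
    N%:R * \sum_(v <- s) e v <= k%:R * E].
Proof.
move=> n_gt0 le_n_k big_gap.
set q := ((k - n) %/ n.+1)%N; set r := (n + (k - n) %% n.+1)%N.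
have k_eq : k = (q * n.+1 + r)%N by rewrite /q /r; have := divn_eq (k - n) n.+1; lia.
have r_in : (n <= r <= n + n)%N by rewrite /r leq_addr leq_add2l -ltnS ltn_pmod.
clearbody q r.
have [a a_in mean_a] := exists_pair_sum_succ n_gt0.
have [base [size_base base_le sum_base cost_base]] := exists_base_levels r_in.
have N2 := triangular_double n; rewrite -/N in N2.
exists (nseq q a ++ nseq q (n.+1 - a) ++ base)%N; split.
- have gap : (n.+1 * q.*2.+1 + r.*2 < n * n.+1)%N by lia.
  rewrite !size_cat !size_nseq; move: size_base; case: eqP => [r_n | /eqP ne_rn] size_base.
    suff : (q.*2.+2 < n)%N by lia.
    by rewrite ltnNge; apply/negP => le_n; move: gap; rewrite r_n; nia.
  suff : (q.*2.+3 < n)%N by lia.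
  by rewrite ltnNge; apply/negP => le_n; move: gap; nia.
- have [a_gt0 le_a_n] := andP a_in.
  have le_b_n : (n.+1 - a <= n)%N by rewrite leq_subLR -add1n leq_add2r.
  by rewrite !all_cat !all_nseq base_le le_a_n le_b_n !orbT.
- rewrite !sumn_cat !sumn_nseq sum_base addnA -mulnDl subnKC.
    by rewrite k_eq mulnC.
  by case/andP: a_in => _ /leqW.
- rewrite !big_cat !big_nseq !iter_addr_0 /= k_eq natrD natrM.
  have := ler_wpM2l (ler0n R (q * n.+1)) mean_a.
  have := congr1 ( *%R^~ (q%:R * (e a + e (n.+1 - a)))) triangular_double_natr.
  rewrite -(mulr_natr (e a)) -(mulr_natr (e _)) !natrM -!natr1.
  lra.
Qed.

Lemma exists_cheap_levels k : (0 < n)%N -> (n <= k <= N)%N ->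
  exists s : seq nat, [/\ (size s <= n)%N, all (leq^~ n) s, (k <= sumn s)%N &
    N%:R * \sum_(v <- s) e v <= k%:R * E].
Proof.
move=> n_gt0 /andP[le_n_k le_k_N].
have [small_gap | big_gap] := leqP (N - k).*2 n.+1.
  exact: exists_levels_rounding.
exact: exists_levels_pairing.
Qed.

End Levels.

Lemma sum_nth_pad (V : nmodType) (F : nat -> V) (s : seq nat) n :
  F 0%N = 0 -> (size s <= n)%N -> \sum_(t < n) F (nth 0%N s t) = \sum_(v <- s) F v.
Proof.
move=> F0 size_s; rewrite (big_nth 0%N) -(big_mkord xpredT (fun t => F (nth 0%N s t))).
rewrite (big_cat_nat (leq0n (size s)) size_s) /= [X in _ + X]big1_seq ?addr0 //.
by move=> i /andP[_]; rewrite mem_index_iota => /andP[le_s _]; rewrite nth_default.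
Qed.

Section Auction.
Variable R : realType.

Lemma win_ge0 (a d : R) : 0 <= win a d.
Proof. by rewrite /win; case: ifP => _ //; case: ifP => _ //; rewrite invr_ge0 ler0n. Qed.

Lemma win_le1 (a d : R) : win a d <= 1.
Proof. by rewrite /win; case: ifP => _ //; case: ifP => _ //; rewrite invf_le1 ?ler1n. Qed.

Lemma win_gt (a d : R) : d < a -> win a d = 1.
Proof. by rewrite /win => ->. Qed.

Definition pi_id n : {perm 'I_n} -> R := fun s => (s == 1%g)%:R.
Arguments pi_id n _ : clear implicits.

Lemma pi_id_distr n : perm_distr (pi_id n).
Proof.
split=> [s|]; first exact: ler0n.
by rewrite (bigD1 1%g) //= {1}/pi_id eqxx big1 ?addr0 // => s /negbTE; rewrite /pi_id => ->.
Qed.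

Lemma card_perm_neq0 n : #|{perm 'I_n}|%:R != 0 :> R.
Proof. by rewrite pnatr_eq0 -lt0n; apply/card_gt0P; exists 1%g. Qed.

Lemma pi_unif_distr n : perm_distr (pi_unif R n).
Proof.
split=> [s|]; first by rewrite invr_ge0 ler0n.
by rewrite sumr_const -(mulr_natr (#|{perm 'I_n}|%:R^-1)) mulVf ?card_perm_neq0.
Qed.

Lemma sum_perm_at n (i : 'I_n) (h : 'I_n -> R) :
  n%:R * \sum_(s : {perm 'I_n}) h (s i) = #|{perm 'I_n}|%:R * \sum_j h j.
Proof.
have transp i' : \sum_(s : {perm 'I_n}) h (s i) = \sum_(s : {perm 'I_n}) h (s i').
  rewrite (reindex_inj (mulgI (tperm i i'))) /=.
  by apply: eq_bigr => s _; rewrite permM tpermL.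
transitivity (\sum_(i' < n) \sum_(s : {perm 'I_n}) h (s i')).
  by rewrite (eq_bigr _ (fun i' _ => esym (transp i'))) sumr_const card_ord mulr_natl.
transitivity (\sum_(s : {perm 'I_n}) \sum_j h j); last by rewrite sumr_const mulr_natl.
by rewrite exchange_big; apply: eq_bigr => s _; rewrite [RHS](reindex_inj (@perm_inj _ s)).
Qed.

Lemma w_id_unif n (bA bD : 'I_n -> R) : (0 < n)%N ->
  w (pi_id n) (pi_unif R n) bA bD = n%:R^-1 * \sum_i \sum_j win (bA i) (bD j).
Proof.
move=> n_gt0; rewrite /w (bigD1 1%g) //= [X in _ + X]big1 ?addr0 => [|s s_ne1].
  rewrite /pi_id /pi_unif eqxx mul1r -mulr_sumr exchange_big /= mulr_sumr [RHS]mulr_sumr.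
  apply: eq_bigr => i _; have := sum_perm_at i (fun j => win (bA i) (bD j)).
  under eq_bigr => s _ do rewrite perm1.
  move=> key; rewrite -[\sum_(j < n) win (bA i) (bD j)](mulKf (card_perm_neq0 n)) -key.
  by field; rewrite card_perm_neq0 pnatr_eq0 -lt0n n_gt0.
by apply: big1 => s' _; rewrite /pi_id (negbTE s_ne1) !mul0r.
Qed.

Lemma w_le_n n (pA pD : {perm 'I_n} -> R) bA bD :
  perm_distr pA -> perm_distr pD -> w pA pD bA bD <= n%:R.
Proof.
move=> [pA_ge0 pA_sum] [pD_ge0 pD_sum].
have win_sum_le sA sD : \sum_(i < n) win (bA (sA i)) (bD (sD i)) <= n%:R.
  by rewrite -[n in n%:R]card_ord -sumr_const ler_sum // => i _; apply: win_le1.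
apply: (@le_trans _ _ (\sum_sA \sum_sD pA sA * pD sD * n%:R)).
  by apply: ler_sum => sA _; apply: ler_sum => sD _; rewrite ler_wpM2l ?mulr_ge0.
under eq_bigr => sA _ do rewrite -mulr_suml -mulr_sumr pD_sum mulr1.
by rewrite -mulr_suml pA_sum mul1r.
Qed.

Lemma w_le_W n rho beta (pA pD : {perm 'I_n} -> R) (bA bD : 'I_n -> R) :
  perm_distr pA -> perm_distr pD -> bid_set (rho * beta) bA ->
  w pA pD bA bD <= W n rho beta pD bD.
Proof.
move=> pA_distr pD_distr bA_bid; apply: ub_le_sup; last by exists pA, bA.
by exists n%:R => _ [pA' [bA' [pA'_distr [_ ->]]]]; apply: w_le_n.
Qed.

Definition sorted_bids n (bD : 'I_n -> R) : seq R := sort <=%R [seq bD j | j <- enum 'I_n].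

(* Levels are 1-based: [sorted_bid bD v] is the [v]-th smallest bid of D for
   [1 <= v <= n], and level [0] costs nothing. *)
Definition sorted_bid n (bD : 'I_n -> R) (v : nat) : R :=
  if v is v'.+1 then nth 0 (sorted_bids bD) v' else 0.

Lemma sorted_bids_perm n (bD : 'I_n -> R) :
  perm_eq (sorted_bids bD) [seq bD j | j <- enum 'I_n].
Proof. by rewrite perm_sort. Qed.

Lemma size_sorted_bids n (bD : 'I_n -> R) : size (sorted_bids bD) = n.
Proof. by rewrite size_sort size_map size_enum_ord. Qed.

Lemma sorted_bid_ge0 n (bD : 'I_n -> R) v : (forall i, 0 <= bD i) -> 0 <= sorted_bid bD v.
Proof.
case: v => [|v] //= bD_ge0; case: (ltnP v (size (sorted_bids bD))) => [v_lt|v_ge].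
  have := mem_nth 0 v_lt; rewrite (perm_mem (sorted_bids_perm bD)).
  by case/mapP => j _ ->.
by rewrite nth_default.
Qed.

Lemma sum_sorted_bid n (bD : 'I_n -> R) : \sum_(i < n) sorted_bid bD i.+1 = \sum_i bD i.
Proof.
have -> : \sum_(i < n) sorted_bid bD i.+1 = \sum_(x <- sorted_bids bD) x.
  by rewrite (big_nth 0) size_sorted_bids big_mkord.
by rewrite (perm_big _ (sorted_bids_perm bD)) big_map big_enum.
Qed.

Lemma card_le_sorted_bid n (bD : 'I_n -> R) v :
  (v <= n)%N -> (v <= #|[pred j | (bD j <= sorted_bid bD v)%R]|)%N.
Proof.
case: v => [//|v] lt_v_n /=; set x := nth 0 (sorted_bids bD) v.
rewrite cardE size_filter -enumT (@eq_count _ _ (preim bD (fun y => (y <= x)%R))) //.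
rewrite -count_map -(seq.permP (sorted_bids_perm bD)).
rewrite -(cat_take_drop v.+1 (sorted_bids bD)) count_cat; apply: leq_trans (leq_addr _ _).
have size_take : size (take v.+1 (sorted_bids bD)) = v.+1.
  by rewrite size_takel // size_sorted_bids.
have all_le : all (fun y => (y <= x)%R) (take v.+1 (sorted_bids bD)).
  apply/(all_nthP 0) => a; rewrite size_take => a_lt; rewrite nth_take //.
  apply: (sorted_leq_nth le_trans lexx 0 (sort_sorted le_total _));
    rewrite ?inE ?size_sort ?size_map -?enumT ?size_enum_ord; lia.
by rewrite all_count in all_le; rewrite (eqP all_le) size_take.
Qed.

Definition level_bids n (bD : 'I_n -> R) (s : seq nat) (eps : R) : 'I_n -> R :=
  fun t => sorted_bid bD (nth 0%N s t) + eps.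

Lemma w_level_bids n (bD : 'I_n -> R) s eps :
  (0 < n)%N -> (size s <= n)%N -> all (leq^~ n) s -> 0 < eps ->
  (sumn s)%:R / n%:R <= w (pi_id n) (pi_unif R n) (level_bids bD s eps) bD.
Proof.
move=> n_gt0 size_s s_le eps_gt0.
rewrite w_id_unif // mulrC ler_pM2l ?invr_gt0 ?ltr0n // sumnE natr_sum.
rewrite -(sum_nth_pad (F := fun v => v%:R : R) (n := n)) //; apply: ler_sum => t _.
have v_le : (nth 0%N s t <= n)%N.
  have [t_lt | t_ge] := ltnP t (size s); last by rewrite nth_default.
  exact: (allP s_le _ (mem_nth 0%N t_lt)).
apply: (le_trans (y := #|[pred j | (bD j <= sorted_bid bD (nth 0%N s t))%R]|%:R)).
  by rewrite ler_nat card_le_sorted_bid.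
rewrite -sum1_card natr_sum big_mkcond /=; apply: ler_sum => j _.
case: ifP => [le_bid | _]; last exact: win_ge0.
by rewrite win_gt // /level_bids (le_lt_trans le_bid) ?ltrDl.
Qed.

Lemma sum_level_bids n (bD : 'I_n -> R) s eps : (size s <= n)%N ->
  \sum_t level_bids bD s eps t = \sum_(v <- s) sorted_bid bD v + eps *+ n.
Proof.
by move=> size_s; rewrite big_split /= sum_nth_pad // sumr_const card_ord.
Qed.

Lemma ell2_eq n (rho : R) : 0 < rho -> rho <= 1 -> ell2 n rho = n.
Proof.
move=> rho_gt0 rho_le1; apply/minn_idPl.
have : (n%:Z <= Num.floor (n%:R / rho))%R.
  by rewrite floor_ge_int ler_pdivlMr // ler_piMr.
lia.
Qed.

Lemma exists_level_budget n (rho : R) : (0 < n)%N -> 2 / n.+1%:R < rho -> rho <= 1 ->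
  exists k : nat, [/\ (n <= k <= 'C(n.+1, 2))%N, k%:R < rho * 'C(n.+1, 2)%:R &
    f n rho (ell2 n rho) = k%:R / n%:R].
Proof.
move=> n_gt0 rho_gt rho_le1; set N := 'C(n.+1, 2).
have N2 := triangular_double n; rewrite -/N in N2.
have n1_neq0 : 1 + n%:R != 0 :> R by rewrite addrC natr1 pnatr_eq0.
have N_gt0 : 0 < N%:R :> R by rewrite ltr0n; nia.
have N_eq : N%:R = (n * n.+1)%:R / 2 :> R by rewrite -N2 -mul2n natrM; field.
have rho_gt0 : 0 < rho by apply: lt_trans rho_gt; rewrite divr_gt0 ?ltr0n.
have n_lt : n%:R < rho * N%:R.
  have -> : n%:R = 2 / n.+1%:R * N%:R :> R by rewrite N_eq natrM; field.
  by rewrite ltr_pM2r.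
set c := Num.ceil (rho * N%:R).
have c_gt : (n%:Z < c)%R by rewrite ceil_gt_int.
set k := `|c - 1|%N.
have k_eq : k%:R = (c - 1)%:~R :> R by rewrite natr_absz ger0_norm //; lia.
have k_lt : k%:R < rho * N%:R by rewrite k_eq ceilB1_lt.
exists k; split=> //.
- rewrite -(ler_nat R) -[X in _ && X](ler_nat R) (ltW (lt_le_trans k_lt _)) ?ger_pMl //.
  by rewrite k_eq -[n%:R]/((n%:Z)%:~R : R) ler_int; lia.
rewrite ell2_eq ?(ltW rho_gt0) // /f /R_ell /less.
have -> : rho / (2 / (n * n.+1)%:R) = rho * N%:R by rewrite N_eq invf_div.
rewrite k_eq intrB /c subrr add0r natrM; field.
by rewrite n1_neq0 pnatr_eq0 -lt0n n_gt0.
Qed.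

End Auction.

Arguments pi_id {R} n _.

Theorem lemma6 (R : realType) (n : nat) (rho beta : R) (bD : 'I_n -> R) :
  (1 <= n)%N -> 0 < beta ->
  2 / (n.+1)%:R < rho -> rho <= 1 ->
  (forall i, 0 <= bD i) -> \sum_i bD i = beta ->
  f n rho (ell2 n rho) <= W n rho beta (pi_unif R n) bD.
Proof.
move=> n_gt0 beta_gt0 rho_gt rho_le1 bD_ge0 sum_bD.
have [k [k_in k_lt ->]] := exists_level_budget n_gt0 rho_gt rho_le1.
have [s [size_s s_le k_le cost_s]] :=
  exists_cheap_levels (e := sorted_bid bD) (erefl _) n_gt0 k_in.
rewrite sum_sorted_bid sum_bD in cost_s.
set N := 'C(n.+1, 2) in k_in k_lt cost_s.
have N_gt0 : 0 < N%:R :> R by rewrite ltr0n; case/andP: k_in; lia.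
pose eps := (rho * beta - k%:R * beta / N%:R) / n%:R.
have eps_gt0 : 0 < eps.
  by rewrite divr_gt0 ?ltr0n // subr_gt0 ltr_pdivrMr // mulrAC ltr_pM2r.
apply: (le_trans _ (w_le_W bD (pi_id_distr R n) (pi_unif_distr R n) _)).
  apply: le_trans (w_level_bids bD n_gt0 size_s s_le eps_gt0).
  by rewrite ler_pM2r ?invr_gt0 ?ltr0n // ler_nat.
split=> [t | ]; first by rewrite addr_ge0 ?sorted_bid_ge0 ?ltW.
rewrite sum_level_bids // -mulr_natr divfK ?pnatr_eq0 -?lt0n //.
by rewrite -ler_pdivlMl // mulrC in cost_s; lra.
Qed.
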